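(* Let $G=(V,D,B)$ be a mixed graph. For $\Lambda\in\mathbb{R}^D_{\mathrm{reg}}$ and $\Omega\in\mathit{PD}(B)$, let $\Sigma=\phi_G(\Lambda,\Omega)$. Then the rank of the Jacobian $J_G(\Lambda,\Omega)$ equals $\mathrm{rank}(\mathbf{J}(\Lambda,\Sigma))+|B|+|V|$.
   Context: A mixed graph with finite vertex set $V$ is a triple $G=(V,D,B)$ with $D$ a set of ordered pairs $(i,j)$, $i\ne j$ (directed edges $i\to j$) and $B$ a set of unordered pairs $\{i,j\}$, $i\ne j$ (bidirected edges). $\mathbb{R}^D_{\mathrm{reg}}$ is the set of real $V\times V$ matrices $\Lambda=(\lambda_{ij})$ with $\lambda_{ij}=0$ for $(i,j)\notin D$ and $I-\Lambda$ invertible; $\mathit{PD}(B)$ is the set of positive definite symmetric $V\times V$ matrices $\Omega$ with $\omega_{ij}=0$ for $i\neq j$, $\{i,j\}\notin B$. The covariance parametrization is $\phi_G:\mathbb{R}^D_{\mathrm{reg}}\times\mathit{PD}(B)\to\mathit{PD}$, $(\Lambda,\Omega)\mapsto (I-\Lambda)^{-T}\Omega(I-\Lambda)^{-1}$, and $J_G(\Lambda,\Omega)$ is its Jacobian with respect to the free parameters: the entries $\lambda_{kl}$, $(k,l)\in D$, the diagonal entries $\omega_{ii}$, $i\in V$, and the entries $\omega_{ij}$, $\{i,j\}\in B$ (with output the entries $\Sigma_{ij}$ indexed by unordered pairs/diagonal). Let $g(\Lambda,\Sigma)=(I-\Lambda)^T\Sigma(I-\Lambda)$ for $\Lambda\in\mathbb{R}^D_{\mathrm{reg}}$,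 $\Sigma$ positive definite, and let $N=\{\{i,j\}: i,j\in V, i\ne j, \{i,j\}\notin B\}$. Then $\mathbf{J}(\Lambda,\Sigma)$ is the $N\times D$ matrix with entries $\mathbf{J}(\Lambda,\Sigma)_{\{i,j\},(k,l)}=\partial g_{ij}(\Lambda,\Sigma)/\partial\lambda_{kl}$, for $\{i,j\}\in N$, $(k,l)\in D$. *)

From HB Require Import structures.
From mathcomp Require Import all_boot all_order all_algebra.
From mathcomp Require Import all_classical all_reals.
From mathcomp Require Import topology normedtype derive.
Set Implicit Arguments. Unset Strict Implicit. Unset Printing Implicit Defensive.
Import Order.TTheory GRing.Theory Num.Theory.
Import numFieldNormedType.Exports.
Local Open Scope ring_scope.

Section MixedGraph.
Variables (R : realType) (n : nat).

(* Vertex set V = 'I_n.  D : rel 'I_n is the set of directed edges (i -> j iff D i j);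
   B : rel 'I_n is the (symmetric) set of bidirected edges. *)

Definition phiG (L O : 'M[R]_n) : 'M[R]_n :=
  (invmx (1%:M - L))^T *m O *m invmx (1%:M - L).

Definition gmap (L S : 'M[R]_n) : 'M[R]_n := (1%:M - L)^T *m S *m (1%:M - L).

(* output coordinates of phi_G: entries Sigma_ij indexed by unordered pairs and
   diagonal, represented by (i, j) with i <= j *)
Definition out_set : {set 'I_n * 'I_n} := [set p : 'I_n * 'I_n | (p.1 <= p.2)%N].

(* free parameters: inl (inl (k,l)) = lambda_kl, (k,l) in D;
   inl (inr i) = omega_ii; inr (i,j) = omega_ij with {i,j} in B, represented with i < j *)
Definition param_set (D B : rel 'I_n) : {set ('I_n * 'I_n + 'I_n) + ('I_n * 'I_n)} :=
  [set x : ('I_n * 'I_n + 'I_n) + ('I_n * 'I_n) | match x with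
           | inl (inl p) => D p.1 p.2
           | inl (inr _) => true
           | inr p => (p.1 < p.2)%N && B p.1 p.2
           end].

Definition param_dir (x : ('I_n * 'I_n + 'I_n) + ('I_n * 'I_n)) : 'M[R]_n * 'M[R]_n :=
  match x with
  | inl (inl p) => (delta_mx p.1 p.2, 0)
  | inl (inr i) => (0, delta_mx i i)
  | inr p => (0, delta_mx p.1 p.2 + delta_mx p.2 p.1)
  end.

Definition JG (D B : rel 'I_n) (L O : 'M[R]_n)
  : 'M[R]_(#|out_set|, #|param_set D B|) :=
  \matrix_(r, c)
    let p := @enum_val _ (mem out_set) r in
    let d := param_dir (@enum_val _ (mem (param_set D B)) c) in
    derive1 (fun t : R^o => phiG (L + t *: d.1) (O + t *: d.2) p.1 p.2) 0.

(* N = non-adjacent (in B) unordered pairs {i,j}, i != j, represented with i < j *)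
Definition N_set (B : rel 'I_n) : {set 'I_n * 'I_n} :=
  [set p : 'I_n * 'I_n | (p.1 < p.2)%N && ~~ B p.1 p.2].

Definition D_set (D : rel 'I_n) : {set 'I_n * 'I_n} := [set p : 'I_n * 'I_n | D p.1 p.2].

Definition B_set (B : rel 'I_n) : {set 'I_n * 'I_n} :=
  [set p : 'I_n * 'I_n | (p.1 < p.2)%N && B p.1 p.2].

Definition Jbold (D B : rel 'I_n) (L S : 'M[R]_n)
  : 'M[R]_(#|N_set B|, #|D_set D|) :=
  \matrix_(r, c)
    let p := @enum_val _ (mem (N_set B)) r in
    let e := @enum_val _ (mem (D_set D)) c in
    derive1 (fun t : R^o => gmap (L + t *: delta_mx e.1 e.2) S p.1 p.2) 0.

Definition posdef (M : 'M[R]_n) : Prop :=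
  M^T = M /\ forall x : 'cV[R]_n, x != 0 -> 0 < (x^T *m M *m x) 0 0.

End MixedGraph.

From HB Require Import structures.
From mathcomp Require Import all_boot all_order all_algebra.
From mathcomp Require Import all_classical all_reals.
From mathcomp Require Import topology normedtype derive.
From mathcomp Require Import ring.
Import Order.TTheory GRing.Theory Num.Theory.
Import numFieldNormedType.Exports.
Set Implicit Arguments. Unset Strict Implicit. Unset Printing Implicit Defensive.
Local Open Scope ring_scope.

(* Write A = (I - Λ)^-1, so that Σ = A^T Ω A.  Moving the parameters in a direction
   (Λ', Ω') moves Σ by A^T H A with H = Λ'^T Σ (I - Λ) + (I - Λ)^T Σ Λ' + Ω'; for a
   rank-one Λ' = E_kl the derivative of the inverse is read off the Sherman-Morrison
   formula.  Congruence by the invertible A is an automorphism of the symmetric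
   matrices, so rank J_G is the rank of the family of the H's over the free
   parameters, written as half-vectorizations.  For a λ-parameter H is -∂g/∂λ, for an
   ω-parameter it is the symmetric unit matrix at a diagonal entry or at a bidirected
   edge.  Projecting onto the coordinates indexed by N kills the ω-rows and turns the
   λ-rows into the columns of J(Λ, Σ), while the kernel of this projection is spanned
   by the ω-rows and has dimension |V| + |B|. *)

Lemma sum_enum_val_eq (R : pzSemiRingType) (T : finType) (A : {set T}) x (xA : x \in A)
    (F : 'I_#|A| -> R) :
  \sum_p F p * (enum_val p == x)%:R = F (enum_rank_in xA x).
Proof.
rewrite (bigD1 (enum_rank_in xA x)) //= enum_rankK_in // eqxx mulr1 big1 ?addr0 //.
move=> p /negbTE px; rewrite -[in enum_val p == x](enum_rankK_in xA xA).
by rewrite (inj_eq enum_val_inj) px mulr0.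
Qed.

Section RankLemmas.
Variable R : fieldType.

Lemma mxrank_map_rows m p q (f : 'rV[R]_p -> 'rV[R]_q) (v : 'I_m -> 'rV[R]_p) :
  linear f -> (\rank (\matrix_i f (v i)) <= \rank (\matrix_i v i))%N.
Proof.
move=> fL; pose F : {linear 'rV[R]_p -> 'rV[R]_q} :=
  HB.pack f (GRing.isLinear.Build _ _ _ _ f fL).
have -> : \matrix_i f (v i) = \matrix_i v i *m lin1_mx F.
  by apply/row_matrixP => i; rewrite row_mul !rowK mul_rV_lin1.
exact: mxrankM_maxl.
Qed.

Lemma mxrank_ker_sub m k r (Y : 'M[R]_(m, k)) (P : 'M[R]_(k, r)) :
  (kermx P <= Y)%MS -> \rank Y = (\rank (Y *m P) + (k - \rank P))%N.
Proof.
move=> kerY; rewrite -(mxrank_mul_ker Y P) -mxrank_ker.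
by have /eqmxP/eqmx_rank -> := capmx_idPr kerY.
Qed.

End RankLemmas.

Section HalfVectorization.
Variables (R : fieldType) (n : nat).

Definition sorted_pair (i j : 'I_n) : 'I_n * 'I_n := if (i <= j)%N then (i, j) else (j, i).

Lemma sorted_pair_out i j : sorted_pair i j \in out_set n.
Proof. by rewrite /sorted_pair /out_set inE; case: (leqP i j) => // /ltnW. Qed.

Definition vech (M : 'M[R]_n) : 'rV[R]_#|out_set n| :=
  \row_r M (enum_val r).1 (enum_val r).2.

Definition unvech (v : 'rV[R]_#|out_set n|) : 'M[R]_n :=
  \matrix_(i, j) v 0 (enum_rank_in (sorted_pair_out i j) (sorted_pair i j)).

Lemma vech_is_linear : linear vech.
Proof. by move=> a M N; apply/rowP => r; rewrite !mxE. Qed.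

Lemma unvech_is_linear : linear unvech.
Proof. by move=> a u v; apply/matrixP => i j; rewrite !mxE. Qed.

HB.instance Definition _ :=
  GRing.isLinear.Build R 'M[R]_n 'rV[R]_#|out_set n| _ vech vech_is_linear.
HB.instance Definition _ :=
  GRing.isLinear.Build R 'rV[R]_#|out_set n| 'M[R]_n _ unvech unvech_is_linear.

Lemma vechK (M : 'M[R]_n) : M^T = M -> unvech (vech M) = M.
Proof.
move=> M_sym; apply/matrixP => i j; rewrite !mxE enum_rankK_in ?sorted_pair_out //.
by rewrite /sorted_pair; case: leqP => //= _; rewrite -[in LHS]M_sym mxE.
Qed.

Lemma vech_delta q : vech (delta_mx (enum_val q).1 (enum_val q).2) = delta_mx 0 q.
Proof. by apply/rowP => r; rewrite !mxE -(inj_eq enum_val_inj). Qed.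

Lemma vech_delta_lower (i j : 'I_n) : (j < i)%N -> vech (delta_mx i j) = 0.
Proof.
move=> ji; apply/rowP => r; rewrite !mxE.
have /[!inE] r_out := enum_valP r.
rewrite (_ : _ && _ = false) //; apply/negbTE/andP => -[/eqP r1 /eqP r2].
by move: r_out; rewrite r1 r2 leqNgt ji.
Qed.

Lemma mxrank_vech_congr m (H : 'I_m -> 'M[R]_n) (T U : 'M[R]_n) :
  T *m U = 1%:M -> (forall c, (H c)^T = H c) ->
  \rank (\matrix_c vech (T^T *m H c *m T)) = \rank (\matrix_c vech (H c)).
Proof.
move=> TU H_sym.
pose congr_vech V v := vech (V^T *m unvech v *m V).
have congr_lin V : linear (congr_vech V).
  move=> a u v; rewrite /congr_vech [unvech _]linearP mulmxDr mulmxDl.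
  by rewrite -scalemxAr -scalemxAl [vech _]linearP.
apply/eqP; rewrite eqn_leq; apply/andP; split.
  have -> : \matrix_c vech (T^T *m H c *m T) = \matrix_c congr_vech T (vech (H c)).
    by apply/row_matrixP => c; rewrite !rowK /congr_vech vechK.
  exact: mxrank_map_rows.
have -> : \matrix_c vech (H c) = \matrix_c congr_vech U (vech (T^T *m H c *m T)).
  apply/row_matrixP => c; rewrite !rowK /congr_vech vechK; last first.
    by rewrite !trmx_mul trmxK H_sym mulmxA.
  by rewrite !mulmxA -trmx_mul TU trmx1 mul1mx -mulmxA TU mulmx1.
exact: mxrank_map_rows.
Qed.

End HalfVectorization.

Section NonadjacentCoordinates.
Variables (R : fieldType) (n : nat) (B : rel 'I_n).

Lemma N_set_out : {subset N_set B <= out_set n}.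
Proof. by move=> p; rewrite !inE => /andP[/ltnW]. Qed.

Definition N_coords (M : 'M[R]_n) : 'rV[R]_#|N_set B| :=
  \row_r M (enum_val r).1 (enum_val r).2.

Lemma N_coordsD (M M' : 'M[R]_n) : N_coords (M + M') = N_coords M + N_coords M'.
Proof. by apply/rowP => r; rewrite !mxE. Qed.

Lemma N_coords_delta i j : (i, j) \notin N_set B -> N_coords (delta_mx i j) = 0.
Proof.
move=> ijN; apply/rowP => r; rewrite !mxE.
case: eqP => [ri|] //=; case: eqP => [rj|] //=.
by move: (enum_valP r) ijN; rewrite [enum_val r]surjective_pairing ri rj => ->.
Qed.

Definition N_proj : 'M[R]_(#|out_set n|, #|N_set B|) :=
  \matrix_(p, r) (enum_val p == enum_val r)%:R.

Lemma vech_N_proj (M : 'M[R]_n) : vech M *m N_proj = N_coords M.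
Proof.
apply/rowP => r; rewrite !mxE; under eq_bigr do rewrite !mxE.
rewrite (sum_enum_val_eq (N_set_out (enum_valP r))
          (fun p => M (enum_val p).1 (enum_val p).2)).
by rewrite enum_rankK_in // N_set_out // enum_valP.
Qed.

Lemma mxrank_N_proj : \rank N_proj = #|N_set B|.
Proof.
apply/eqP; rewrite eqn_leq rank_leq_col -{1}(mxrank1 R #|N_set B|).
have <- : N_proj^T *m N_proj = 1%:M.
  apply/matrixP => r r'; rewrite !mxE; under eq_bigr do rewrite !mxE.
  rewrite (sum_enum_val_eq (N_set_out (enum_valP r'))
            (fun p => (enum_val p == enum_val r)%:R)).
  by rewrite enum_rankK_in ?N_set_out ?enum_valP // (inj_eq enum_val_inj) eq_sym.
exact: mxrankM_maxr.
Qed.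

Lemma kermx_N_proj_sub m (Y : 'M[R]_(m, #|out_set n|)) :
  (forall q, enum_val q \notin N_set B -> (delta_mx 0 q : 'rV_#|out_set n|) <= Y)%MS ->
  (kermx N_proj <= Y)%MS.
Proof.
move=> offN_sub; apply/row_subP => k; set v := row k (kermx N_proj).
have vN : v *m N_proj = 0 by rewrite /v -row_mul mulmx_ker row0.
rewrite (row_sum_delta v); apply: summx_sub => q _.
have [qN|/offN_sub qY] := boolP (enum_val q \in N_set B); last exact: scalemx_sub.
have : (v *m N_proj) 0 (enum_rank_in qN (enum_val q)) = v 0 q.
  rewrite mxE (eq_bigr (fun p => v 0 p * (enum_val p == enum_val q)%:R)) => [|p _].
    by rewrite (sum_enum_val_eq (enum_valP q)) enum_valK_in.
  by rewrite [N_proj _ _]mxE enum_rankK_in.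
by rewrite vN mxE => <-; rewrite scale0r sub0mx.
Qed.

Lemma card_out_set : #|out_set n| = (#|N_set B| + #|B_set B| + n)%N.
Proof.
pose upper := [set p : 'I_n * 'I_n | (p.1 < p.2)%N].
have upper_split : #|upper| = (#|N_set B| + #|B_set B|)%N.
  rewrite -(cardsID (B_set B) upper) addnC.
  have -> : upper :\: B_set B = N_set B.
    by apply/setP => p; rewrite !inE; case: (_ < _)%N; case: B.
  have -> : upper :&: B_set B = B_set B.
    by apply/setP => p; rewrite !inE; case: (_ < _)%N; case: B.
  by [].
have diag : out_set n :\: upper = [set (i, i) | i in [set: 'I_n]].
  apply/setP => -[a b]; rewrite !inE /= -leqNgt.
  apply/idP/imsetP => [/andP[ba ab]|[i _ [-> ->]]]; last by rewrite leqnn.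
  by exists a; rewrite ?inE // (_ : b = a) //; apply/val_inj/eqP; rewrite eqn_leq ba ab.
have upper_out : out_set n :&: upper = upper.
  by apply/setP => p; rewrite !inE andb_idl // => /ltnW.
rewrite -(cardsID upper (out_set n)) upper_out upper_split diag.
by rewrite card_imset ?cardsT ?card_ord // => i j [].
Qed.

End NonadjacentCoordinates.

Section RankOneUpdate.
Variables (R : fieldType) (n : nat).

Lemma delta_mx_mul_delta (A : 'M[R]_n) k l :
  delta_mx k l *m A *m delta_mx k l = A l k *: delta_mx k l.
Proof.
apply/matrixP => i j; rewrite !mxE (bigD1 k) //= big1 => [|a /negbTE ak].
  rewrite !mxE (bigD1 l) //= big1 => [|b /negbTE bl]; last by rewrite !mxE bl andbF mul0r.
  rewrite !mxE !eqxx andbT addr0.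
  by case: (i == k); case: (j == l); rewrite /= ?mul0r ?mulr0 ?mulr1 ?mul1r ?addr0.
by rewrite [delta_mx k l a j]mxE ak mulr0.
Qed.

Lemma invmx_rank1_update (M : 'M[R]_n) k l t :
  M \in unitmx -> 1 - t * invmx M l k != 0 ->
  invmx (M - t *: delta_mx k l) =
  invmx M + (t / (1 - t * invmx M l k)) *: (invmx M *m delta_mx k l *m invmx M).
Proof.
set A := invmx M; set c := A l k; set s := t / (1 - t * c) => Mu c1.
have s_eq : s - (t + t * (s * c)) = 0 by rewrite /s; field.
have : (M - t *: delta_mx k l) *m (A + s *: (A *m delta_mx k l *m A)) = 1%:M.
  rewrite mulmxBl !mulmxDr -!scalemxAl -!scalemxAr !mulmxA mulmxV // mul1mx.
  rewrite delta_mx_mul_delta -scalemxAl scalerA -/c.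
  by rewrite scalerA -scalerDl -addrA -scalerBl s_eq scale0r addr0.
move=> MX; have [Xu _] := mulmx1_unit MX.
by rewrite -[RHS](mulKmx Xu) MX mulmx1.
Qed.

End RankOneUpdate.

Section Derivatives.
Variable R : realType.
Local Open Scope classical_set_scope.

Lemma cvg_id_dnbhs0 : (fun h : R^o => h) @ (0 : R^o)^' --> (0 : R^o).
Proof. exact: nbhs_dnbhs. Qed.

Lemma derive1_at0_quotient (f g : R^o -> R^o) (b : R) :
  (\forall h \near 0^', f h - f 0 = h * g h) -> g @ 0^' --> b ->
  derive1 f 0 = b.
Proof.
move=> fg gb; rewrite /derive1; apply: cvg_lim => //.
apply: cvg_trans gb; apply: near_eq_cvg; near=> h.
have h0 : h != 0 by near: h; exact: nbhs_dnbhs_neq.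
rewrite addr0 (_ : f h - f 0 = h * g h); last by near: h.
by rewrite /GRing.scale /= mulKf.
Unshelve. all: by end_near. Qed.

Lemma quad_form_shift n (A P O : 'M[R]_n) (s : R) :
  (A + s *: P)^T *m O *m (A + s *: P) =
  A^T *m O *m A + s *: (P^T *m O *m A + A^T *m O *m P) + (s * s) *: (P^T *m O *m P).
Proof.
rewrite [(A + _)^T]linearD /= linearZ /= !mulmxDl !mulmxDr.
rewrite -!scalemxAl -!scalemxAr !scalerDr scalerA.
by rewrite !addrA; congr (_ + _); rewrite -!addrA; congr (_ + _); rewrite addrC.
Qed.

Lemma derive1_quad_form n (A P O : 'M[R]_n) (u f : R^o -> R^o) (a : R) i j :
  (\forall h \near (0 : R^o)^',
     f h = ((A + (h * u h) *: P)^T *m O *m (A + (h * u h) *: P)) i j) ->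
  f 0 = (A^T *m O *m A) i j -> u @ (0 : R^o)^' --> a ->
  derive1 f 0 = a * (P^T *m O *m A + A^T *m O *m P) i j.
Proof.
move=> fQ f0 ua.
pose b : R := (P^T *m O *m A + A^T *m O *m P) i j; pose d : R := (P^T *m O *m P) i j.
apply: (@derive1_at0_quotient f (fun h => u h * b + h * (u h * u h) * d) (a * b)).
  apply: filterS fQ => h ->.
  by rewrite f0 quad_form_shift /b /d !mxE; ring.
apply: cvg_trans
  (cvgD (cvgMr_tmp (b := b) ua) (cvgMr_tmp (b := d) (cvgM cvg_id_dnbhs0 (cvgM ua ua)))) _.
by rewrite !mul0r addr0.
Qed.

End Derivatives.

(* (I - Λ)^T dΣ (I - Λ) for the direction d = (dΛ, dΩ) of φ_G at a point where Σ = S. *)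
Definition tangent_core (R : pzRingType) n (L S : 'M[R]_n) (d : 'M[R]_n * 'M[R]_n) :=
  d.1^T *m S *m (1%:M - L) + (1%:M - L)^T *m S *m d.1 + d.2.

Lemma tangent_core0 (R : pzRingType) n (L S E : 'M[R]_n) : tangent_core L S (0, E) = E.
Proof. by rewrite /tangent_core /= trmx0 !mul0mx mulmx0 !add0r. Qed.

Lemma tangent_core_sym (R : comPzRingType) n (L S : 'M[R]_n) d :
  S^T = S -> d.2^T = d.2 -> (tangent_core L S d)^T = tangent_core L S d.
Proof.
move=> S_sym d2_sym; rewrite /tangent_core; move: (1%:M - L) => IL.
rewrite !linearD /= !trmx_mul !trmxK S_sym d2_sym !mulmxA.
by rewrite [_ + (_ *m _)]addrC.
Qed.

Section PhiGDerivative.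
Variables (R : realType) (n : nat) (L O : 'M[R]_n).
Hypothesis L_reg : (1%:M - L) \in unitmx.
Local Open Scope classical_set_scope.
Local Notation A := (invmx (1%:M - L)).

Lemma derive1_phiG_lambda k l i j :
  derive1 (fun t : R^o => phiG (L + t *: delta_mx k l) (O + t *: 0) i j) 0 =
  (A^T *m tangent_core L (phiG L O) (delta_mx k l, 0) *m A) i j.
Proof.
set c := A l k; set P := A *m delta_mx k l *m A.
have ILA : (1%:M - L) *m A = 1%:M := mulmxV L_reg.
have -> : A^T *m tangent_core L (phiG L O) (delta_mx k l, 0) *m A =
          P^T *m O *m A + A^T *m O *m P.
  rewrite /tangent_core /phiG /= addr0; set IL := 1%:M - L in ILA *.
  rewrite mulmxDr mulmxDl /P !trmx_mul !mulmxA.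
  rewrite -[_ *m IL *m _]mulmxA -[_^T *m IL^T]trmx_mul ILA.
  by rewrite trmx1 mulmx1 mul1mx.
have c1 : (fun h : R^o => 1 - h * c) @ (0 : R^o)^' --> (1 : R^o).
  apply: cvg_trans (cvgB (cvg_cst (1 : R^o)) (cvgMr_tmp (b := c) (@cvg_id_dnbhs0 R))) _.
  by rewrite mul0r subr0.
rewrite -[RHS]mul1r; apply: (derive1_quad_form (u := fun h => (1 - h * c)^-1)).
- near=> h; have h1 : 1 - h * c != 0 by near: h; exact: cvgr_neq0 c1 (oner_neq0 _).
  by rewrite /phiG scaler0 addr0 opprD addrA invmx_rank1_update.
- by rewrite /phiG scale0r scaler0 !addr0.
- by rewrite -[X in _ --> X]invr1; exact: cvgV (oner_neq0 _) c1.
Unshelve. all: by end_near. Qed.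

Lemma derive1_phiG_omega E i j :
  derive1 (fun t : R^o => phiG (L + t *: 0) (O + t *: E) i j) 0 =
  (A^T *m tangent_core L (phiG L O) (0, E) *m A) i j.
Proof.
rewrite tangent_core0.
apply: (@derive1_at0_quotient _ _ (fun=> (A^T *m E *m A) i j)); last exact: cvg_cst.
apply: nearW => h; rewrite /phiG scaler0 !scale0r !addr0 mulmxDr mulmxDl.
by rewrite -scalemxAr -scalemxAl mxE addrAC subrr add0r mxE.
Qed.

Lemma derive1_phiG_param x i j :
  derive1 (fun t : R^o =>
    phiG (L + t *: (param_dir R x).1) (O + t *: (param_dir R x).2) i j) 0 =
  (A^T *m tangent_core L (phiG L O) (param_dir R x) *m A) i j.
Proof.
case: x => [[e|k]|e] /=; [exact: derive1_phiG_lambda | exact: derive1_phiG_omega ..].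
Qed.

End PhiGDerivative.

Lemma derive1_gmap (R : realType) n (L S : 'M[R]_n) k l i j :
  derive1 (fun t : R^o => gmap (L + t *: delta_mx k l) S i j) 0 =
  - tangent_core L S (delta_mx k l, 0) i j.
Proof.
rewrite /tangent_core /= addr0 -mulN1r.
apply: (derive1_quad_form (u := fun=> -1)); last exact: cvg_cst.
  by apply: nearW => h; rewrite /gmap mulrN1 scaleNr opprD addrA.
by rewrite /gmap scale0r addr0.
Qed.

Lemma param_dir_sym (R : realType) n (x : ('I_n * 'I_n + 'I_n) + ('I_n * 'I_n)) :
  (param_dir R x).2^T = (param_dir R x).2.
Proof.
by case: x => [[e|i]|e] /=; rewrite ?trmx0 ?trmx_delta // linearD /= !trmx_delta addrC.
Qed.

Definition param_rows (R : realType) n (D B : rel 'I_n) (L S : 'M[R]_n)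
    : 'M[R]_(#|param_set D B|, #|out_set n|) :=
  \matrix_c vech (tangent_core L S (param_dir R (enum_val c))).

Section ParamRows.
Variables (R : realType) (n : nat) (D B : rel 'I_n) (L S : 'M[R]_n).
Local Notation param_rows := (param_rows D B L S).

Lemma row_trmx_Jbold d :
  row d (Jbold D B L S)^T =
  - N_coords B (tangent_core L S (delta_mx (enum_val d).1 (enum_val d).2, 0)).
Proof. by apply/rowP => r; rewrite 3![LHS]mxE /= derive1_gmap !mxE. Qed.

Lemma mxrank_param_rows_N_proj :
  \rank (param_rows *m N_proj R B) = \rank (Jbold D B L S).
Proof.
rewrite -(mxrank_tr (Jbold D B L S)).
apply/eqmx_rank/andP; split.
  apply/row_subP => c; rewrite row_mul rowK vech_N_proj.
  have := enum_valP c; rewrite inE; case: (enum_val c) => [[e|i]|[a b]] /=.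
  - move=> De; have eD : e \in D_set D by rewrite inE.
    have -> : N_coords B (tangent_core L S (delta_mx e.1 e.2, 0)) =
              - row (enum_rank_in eD e) (Jbold D B L S)^T.
      by rewrite row_trmx_Jbold enum_rankK_in // opprK.
    by rewrite eqmx_opp row_sub.
  - by rewrite tangent_core0 N_coords_delta ?sub0mx // inE ltnn.
  - move=> /andP[ab Bab]; rewrite tangent_core0 N_coordsD !N_coords_delta ?addr0 ?sub0mx //.
      by rewrite inE /= ltnNge (ltnW ab).
    by rewrite inE /= Bab andbF.
apply/row_subP => d.
have eP : inl (inl (enum_val d)) \in param_set D B.
  by have := enum_valP d; rewrite !inE.
rewrite row_trmx_Jbold eqmx_opp.
have -> : N_coords B (tangent_core L S (delta_mx (enum_val d).1 (enum_val d).2, 0)) =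
          row (enum_rank_in eP (inl (inl (enum_val d)))) (param_rows *m N_proj R B).
  by rewrite row_mul rowK vech_N_proj enum_rankK_in.
exact: row_sub.
Qed.

Lemma kermx_N_proj_param_rows : (kermx (N_proj R B) <= param_rows)%MS.
Proof.
apply: kermx_N_proj_sub => q qN; have := enum_valP q; rewrite inE.
case Eq: (enum_val q) qN => [a b]; rewrite inE /= => qN ab.
have [a_eq_b|a_neq_b] := eqVneq a b.
  have aP : inl (inr a) \in param_set D B by rewrite inE.
  suff -> : delta_mx 0 q = row (enum_rank_in aP (inl (inr a))) param_rows by exact: row_sub.
  by rewrite rowK enum_rankK_in //= tangent_core0 -vech_delta Eq a_eq_b.
have a_lt_b : (a < b)%N by rewrite ltn_neqAle a_neq_b.
have Bab : B a b by move: qN; rewrite a_lt_b negbK.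
have abP : inr (a, b) \in param_set D B by rewrite inE /= a_lt_b Bab.
suff -> : delta_mx 0 q = row (enum_rank_in abP (inr (a, b))) param_rows by exact: row_sub.
rewrite rowK enum_rankK_in //= tangent_core0 linearD /= -vech_delta Eq.
by rewrite (vech_delta_lower R a_lt_b) addr0.
Qed.

End ParamRows.

Section JacobianRank.
Variables (R : realType) (n : nat) (D B : rel 'I_n) (L O : 'M[R]_n).
Hypotheses (L_reg : (1%:M - L) \in unitmx) (O_sym : O^T = O).
Local Notation A := (invmx (1%:M - L)).
Local Notation S := (phiG L O).

Lemma trmx_JG :
  (JG D B L O)^T = \matrix_c vech (A^T *m tangent_core L S (param_dir R (enum_val c)) *m A).
Proof.
apply/matrixP => c r; rewrite [LHS]mxE [LHS]mxE /= derive1_phiG_param //.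
by rewrite [RHS]mxE [RHS]mxE.
Qed.

Lemma phiG_sym : S^T = S.
Proof. by rewrite /phiG !trmx_mul trmxK O_sym mulmxA. Qed.

Lemma mxrank_JG : \rank (JG D B L O) = \rank (param_rows D B L S).
Proof.
rewrite -mxrank_tr trmx_JG (mxrank_vech_congr (U := 1%:M - L)) ?mulVmx //.
by move=> c; rewrite tangent_core_sym ?phiG_sym ?param_dir_sym.
Qed.

End JacobianRank.

Theorem lemma1 (R : realType) (n : nat) (D B : rel 'I_n)
  (D_irr : forall i, ~~ D i i)
  (B_irr : forall i, ~~ B i i)
  (B_sym : forall i j, B i j = B j i)
  (L O : 'M[R]_n)
  (L_supp : forall i j, ~~ D i j -> L i j = 0)
  (L_reg : (1%:M - L) \in unitmx)
  (O_pd : posdef O)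
  (O_supp : forall i j, i != j -> ~~ B i j -> O i j = 0) :
  let S := phiG L O in
  \rank (JG D B L O) = (\rank (Jbold D B L S) + #|B_set B| + n)%N.
Proof.
move=> S; rewrite (mxrank_JG D B L_reg O_pd.1).
rewrite (mxrank_ker_sub (kermx_N_proj_param_rows D B L S)) mxrank_param_rows_N_proj.
by rewrite mxrank_N_proj (card_out_set B) -addnA addKn addnA.
Qed.
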